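(* In the setting below, if a correct process $i$ calls $\mathtt{get\_sink}(\mathit{PD}_i,f)$, it will eventually receive (learn) $V_{\mathit{sink}}$.
   Context: System: a finite set $\Pi$ of processes with unique identifiers communicating over authenticated reliable point-to-point channels in a partially synchronous system; $f\ge0$ is known; $W\subseteq\Pi$ are the correct processes, $F=\Pi\setminus W$ the Byzantine faulty ones with $|F|\le f$ (chosen statically). Each process $i$ is given $\mathit{PD}_i\subseteq\Pi$; the knowledge connectivity graph $G_{\mathit{di}}$ is the directed graph on $\Pi$ with edge $(i,j)$ iff $j\in\mathit{PD}_i$. A sink component is a strongly connected component of $G_{\mathit{di}}$ from which no path leads outside. A directed graph is $k$-OSR if (1) its underlying undirected graph is connected; (2) its condensation has exactly one sink $G_{\mathit{sink}}$; (3) $G_{\mathit{sink}}$ is $k$-strongly connected; (4) from every node outside $G_{\mathit{sink}}$ to every node in it there are at least $k$ node-disjoint directed paths. Standing assumption: deleting $F$ from $G_{\mathit{di}}$ yields an $(f+1)$-OSR graph, $G_{\mathit{di}}$ has a unique sink component with vertex set $V_{\mathit{sink}}$, and it contains at least $2f+1$ correct processes. Primitives from prior work (assumed): (i) a procedure $\mathtt{SINK}(\mathit{PD}_i,f)$ which, executed by any correct $i\in V_{\mathit{sink}}$, terminates and returns $\langle\mathit{true},V_{\mathit{sink}}\rangle$ (it may not terminate at non-sink members); (ii) a reachable-reliable broadcast with operations $\mathtt{reachable\_bcast}(m,i)$ and $\mathtt{reachable\_deliver}(m,i)$ such that if a correct process $i$ invokes $\mathtt{reachable\_bcast}(m,i)$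 then every correct process $f$-reachable from $i$ (i.e. joined to it by at least $f+1$ node-disjoint paths of correct processes in $G_{\mathit{di}}$) eventually delivers $m$ from $i$, only messages actually broadcast by $i$ are delivered as from $i$, and every correct sink member is $f$-reachable from every process. Algorithm $\mathtt{get\_sink}$ at process $i$: local variables $\mathit{sink}=\emptyset$, $\mathit{asked}=\emptyset$, and a collection $\mathit{values}$ of received values. When called: if $\mathit{sink}=\emptyset$, $i$ invokes $\mathtt{reachable\_bcast}(\mathtt{GET\_SINK},i)$, starts in parallel a task that waits until some value $v$ has been received (in $\mathit{values}$) more than $f$ times and then sets $\mathit{sink}\leftarrow v$, and runs $\mathtt{SINK}(\mathit{PD}_i,f)$; if that returns $\langle\mathit{true},V\rangle$ it sets $\mathit{sink}\leftarrow V$ and starts a task that forever: whenever some $j\in\mathit{asked}$ exists, sends $\langle\mathtt{SINK},\mathit{sink}\rangle$ to $j$ and removes $j$ from $\mathit{asked}$. Then $i$ waits until $\mathit{sink}\neq\emptyset$ and returns $\langle\mathit{true},\mathit{sink}\rangle$ if $i\in\mathit{sink}$, otherwise $\langle\mathit{false},\mathit{sink}\rangle$. Upon $\mathtt{reachable\_deliver}(\mathtt{GET\_SINK},j)$, $i$ adds $j$ to $\mathit{asked}$. Upon receiving $\langle\mathtt{SINK},V\rangle$, $i$ adds $V$ to $\mathit{values}$. *)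

From mathcomp Require Import all_boot.
Set Implicit Arguments. Unset Strict Implicit. Unset Printing Implicit Defensive.

Section Graphs.
Variable P : finType.

Definition Gdi (PD : P -> {set P}) : rel P := fun i j => j \in PD i.

Definition restrict (r : rel P) (A : {set P}) : rel P :=
  fun x y => [&& x \in A, y \in A & r x y].

Definition symr (r : rel P) : rel P := fun x y => r x y || r y x.

(* S is a sink component of the graph (vertex set A, edges r restricted to A):
   a nonempty strongly connected set of vertices from which no path leads out.
   (Such an S is exactly a strongly connected component that is a sink of the
   condensation.) *)
Definition sink_comp (r : rel P) (A S : {set P}) : Prop :=
  [/\ S != set0, S \subset A,
      (forall x y, x \in S -> y \in S -> connect r x y) &
      (forall x y, x \in S -> connect r x y -> y \in S)].

(* There are at least k node-disjoint directed paths from u to v in r.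
   Each path is given by its sequence p of internal vertices
   (u, p_1, ..., p_m, v); distinct paths share no internal vertex. *)
Definition disjoint_paths (r : rel P) (u v : P) (k : nat) : Prop :=
  exists ps : seq (seq P),
    [/\ k <= size ps, uniq ps,
        (forall p, p \in ps -> [/\ path r u (rcons p v), u \notin p & v \notin p]) &
        (forall p q, p \in ps -> q \in ps -> p != q -> forall x, x \in p -> x \notin q)].

Definition OSR (k : nat) (r : rel P) (A : {set P}) : Prop :=
  let rA := restrict r A in
  (forall x y, x \in A -> y \in A -> connect (symr rA) x y) /\
  exists Ssink : {set P},
    [/\ sink_comp rA A Ssink,
        (forall S, sink_comp rA A S -> S = Ssink),
        (forall u v, u \in Ssink -> v \in Ssink -> u != v ->
            disjoint_paths (restrict rA Ssink) u v k) &
        (forall u v, u \in A -> u \notin Ssink -> v \in Ssink ->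
            disjoint_paths rA u v k)].

Definition f_reachable (r : rel P) (W : {set P}) (f : nat) (i j : P) : Prop :=
  disjoint_paths (fun x y => r x y && (y \in W)) i j f.+1.

End Graphs.

(* For a process j:
   call j        = Some t0 iff j (first) invokes get_sink at time t0
   sinkv j t     = value of j's local variable sink at time t
   bcast j t     : j invokes reachable_bcast(GET_SINK, j) at time t
   deliver j k t : j executes reachable_deliver(GET_SINK, k) at time t
   send j k V t  : j sends <SINK, V> to k at time t
   recv j k V t  : j receives <SINK, V> from k at time t
   sink_start j t: j starts procedure SINK(PD_j, f) at time t
   sink_ret j t b V : SINK at j returns <b, V> at time t
   ret j t b V   : get_sink at j returns <b, V> at time t
   Nothing is constrained for Byzantine processes. *)
Record run (P : finType) := Run {
  call : P -> option nat;
  sinkv : P -> nat -> {set P};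
  bcast : P -> nat -> Prop;
  deliver : P -> P -> nat -> Prop;
  send : P -> P -> {set P} -> nat -> Prop;
  recv : P -> P -> {set P} -> nat -> Prop;
  sink_start : P -> nat -> Prop;
  sink_ret : P -> nat -> bool -> {set P} -> Prop;
  ret : P -> nat -> bool -> {set P} -> Prop }.

Section Specs.
Variables (P : finType) (R : run P) (W : {set P}) (f : nat).

(* (k, v) is in j's collection values at time t: received strictly before t. *)
Definition received (j k : P) (v : {set P}) (t : nat) : Prop :=
  exists s, s < t /\ recv R j k v s.

Definition supported (j : P) (v : {set P}) (t : nat) : Prop :=
  exists K : {set P}, f < #|K| /\ forall k, k \in K -> received j k v t.

(* Authenticated reliable point-to-point channels between correct processes. *)
Definition channels_spec : Prop :=
  (forall j k V t, j \in W -> k \in W -> send R j k V t ->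
     exists t', t <= t' /\ recv R k j V t') /\
  (forall j k V t, j \in W -> k \in W -> recv R j k V t ->
     exists s, s <= t /\ send R k j V s).

Definition rbcast_spec (r : rel P) : Prop :=
  (forall k t, k \in W -> bcast R k t ->
     forall j, j \in W -> f_reachable r W f k j -> exists t', deliver R j k t') /\
  (forall j k t, j \in W -> k \in W -> deliver R j k t ->
     exists s, s <= t /\ bcast R k s).

(* Procedure SINK from prior work. *)
Definition sink_spec (Vsink : {set P}) : Prop :=
  [/\ (forall j t, j \in W -> j \in Vsink -> sink_start R j t ->
         exists t', t <= t' /\ sink_ret R j t' true Vsink),
      (forall j t b V, j \in W -> j \in Vsink -> sink_ret R j t b V ->
         b = true /\ V = Vsink),
      (forall j t V, j \in W -> sink_ret R j t true V -> V = Vsink) &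
      (forall j t b V, j \in W -> sink_ret R j t b V ->
         exists s, s <= t /\ sink_start R j s)].

(* Behaviour of a correct process j running algorithm get_sink
   (with fair execution of its parallel tasks). *)
Definition algo_spec (j : P) : Prop :=
  (sinkv R j 0 = set0) /\
  (forall t0, call R j = Some t0 -> bcast R j t0 /\ sink_start R j t0) /\
  (forall t, bcast R j t -> call R j = Some t) /\
  (forall t, sink_start R j t -> call R j = Some t) /\
  (forall t V, sink_ret R j t true V -> sinkv R j t.+1 = V) /\
  (* sink only changes by one of the two assignments of the algorithm *)
  (forall t, sinkv R j t.+1 != sinkv R j t ->
     (exists t0, call R j = Some t0 /\ t0 <= t) /\
     (sink_ret R j t true (sinkv R j t.+1) \/
      supported j (sinkv R j t.+1) t.+1)) /\
  (* waiting task: once some value is received more than f times,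
     it eventually sets sink to such a value *)
  (forall t0 v t, call R j = Some t0 -> supported j v t ->
     exists t' v', maxn t0 t <= t' /\ supported j v' t'.+1 /\
                   sinkv R j t'.+1 = v') /\
  (* responder task: safety (answers only asked processes, with current sink,
     once SINK has returned <true, _>) *)
  (forall k V t, send R j k V t ->
     (exists t1 V1, t1 < t /\ sink_ret R j t1 true V1) /\
     (exists t2, t2 <= t /\ deliver R j k t2) /\
     V = sinkv R j t) /\
  (forall k t1 V1 t2, sink_ret R j t1 true V1 -> deliver R j k t2 ->
     exists t, t1 < t /\ t2 <= t /\ send R j k (sinkv R j t) t) /\
  (forall t b V, ret R j t b V ->
     (exists t0, call R j = Some t0 /\ t0 <= t) /\
     V = sinkv R j t /\ V != set0 /\ b = (j \in V)) /\
  (* return of get_sink: liveness (waits until sink <> empty) *)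
  (forall t0 t, call R j = Some t0 -> t0 <= t -> sinkv R j t != set0 ->
     exists t' b V, t <= t' /\ ret R j t' b V).

End Specs.

From mathcomp Require Import all_boot.

Set Implicit Arguments.
Unset Strict Implicit.
Unset Printing Implicit Defensive.

(* Safety: by induction on time, every update of the sink variable of a correct
   process writes V_sink.  SINK returns only V_sink at correct processes, and a
   value received from more than f processes was sent by some correct process,
   which answers only after its own SINK returned, hence with V_sink.
   Liveness: GET_SINK from i reaches each of the at least 2f+1 correct sink
   members, since they are f-reachable from i; each of them answers V_sink, so
   i eventually receives V_sink more than f times, its waiting task sets sink,
   and get_sink returns.  By safety the returned value is V_sink. *)

Section UpdatesToValue.
Variables (T : eqType) (g : nat -> T) (v : T).

Lemma updates_to_value_dichotomy t :
  (forall s, s < t -> g s.+1 != g s -> g s.+1 = v) -> g t = g 0 \/ g t = v.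
Proof.
elim: t => [|t IH] upd; first by left.
case: (eqVneq (g t.+1) (g t)) => [->|/(upd t (ltnSn t)) ->]; last by right.
by apply: IH => s st; apply: upd; apply: leqW.
Qed.

Lemma updates_to_value_stable s t :
  (forall r, r < t -> g r.+1 != g r -> g r.+1 = v) -> s <= t -> g s = v -> g t = v.
Proof.
elim: t => [|t IH] upd; first by rewrite leqn0 => /eqP ->.
rewrite leq_eqVlt ltnS => /orP[/eqP -> //|st] gs.
case: (eqVneq (g t.+1) (g t)) => [->|/(upd t (ltnSn t)) //].
by apply: IH gs => // r rt; apply: upd; apply: leqW.
Qed.

End UpdatesToValue.

Lemma eventually_forall_seq (T : eqType) (Q : T -> nat -> Prop) (s : seq T) :
  (forall x n m, n <= m -> Q x n -> Q x m) ->
  (forall x, x \in s -> exists n, Q x n) -> exists n, forall x, x \in s -> Q x n.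
Proof.
move=> mono; elim: s => [|a s IH] ev; first by exists 0.
have [na Qa] := ev a (mem_head _ _).
have [ns Qs] : exists n, forall x, x \in s -> Q x n.
  by apply: IH => x xs; apply: ev; rewrite inE xs orbT.
exists (maxn na ns) => x; rewrite inE => /orP[/eqP ->|xs].
  exact: mono (leq_maxl _ _) Qa.
exact: mono (leq_maxr _ _) (Qs x xs).
Qed.

Section GetSink.
Variables (P : finType) (R : run P) (W : {set P}) (f : nat) (Vsink : {set P}).

Hypothesis byzantine_le : #|~: W| <= f.
Hypothesis sinkP : sink_spec R W Vsink.
Hypothesis channelsP : channels_spec R W.
Hypothesis algoP : forall j, j \in W -> algo_spec R f j.

Definition updates_to_Vsink_before (t : nat) : Prop :=
  forall j, j \in W -> forall s, s < t ->
    sinkv R j s.+1 != sinkv R j s -> sinkv R j s.+1 = Vsink.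

Lemma supported_correct_sender j v t :
  supported R f j v t -> exists2 k, k \in W & received R j k v t.
Proof.
move=> [K [fK recK]].
have /subsetPn [k kK] : ~~ (K \subset ~: W).
  by apply: contraL fK => /subset_leq_card KW; rewrite -leqNgt (leq_trans KW).
by rewrite inE negbK => kW; exists k; last exact: recK.
Qed.

Lemma sent_value_Vsink t k j v s :
  updates_to_Vsink_before t -> k \in W -> send R k j v s -> s <= t -> v = Vsink.
Proof.
move=> upd kW sent st.
have [_ [_ [_ [_ [sinkvE [_ [_ [sendP _]]]]]]]] := algoP kW.
have [[t1 [V1 [t1s ret1]]] [_ ->]] := sendP _ _ _ sent.
have [_ _ trueE _] := sinkP.
apply: (@updates_to_value_stable _ (sinkv R k) _ t1.+1) => //.
  by move=> r rs; apply: upd => //; apply: leq_trans st.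
by rewrite (sinkvE _ _ ret1); apply: trueE ret1.
Qed.

Lemma supported_Vsink_before t j v :
  updates_to_Vsink_before t -> j \in W -> supported R f j v t.+1 -> v = Vsink.
Proof.
move=> upd jW /supported_correct_sender [k kW [s0 [s0t rec]]].
have [s [ss0 sent]] := channelsP.2 _ _ _ _ jW kW rec.
by apply: sent_value_Vsink upd kW sent _; apply: leq_trans ss0 _.
Qed.

Lemma updates_to_Vsink t : updates_to_Vsink_before t.
Proof.
elim: t => [//|t IH] j jW s; rewrite ltnS leq_eqVlt => /orP[/eqP ->|]; last exact: IH.
have [_ [_ [_ [_ [_ [changeP _]]]]]] := algoP jW.
move=> /changeP [_ [ret|supp]]; last exact: supported_Vsink_before supp.
by have [_ _ trueE _] := sinkP; apply: trueE ret.
Qed.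

Lemma sinkv_set0_or_Vsink j t :
  j \in W -> sinkv R j t = set0 \/ sinkv R j t = Vsink.
Proof.
move=> jW; have [sinkv0 _] := algoP jW.
by rewrite -sinkv0; apply: updates_to_value_dichotomy => s; apply: updates_to_Vsink.
Qed.

Lemma sinkv_Vsink_stable j s t :
  j \in W -> s <= t -> sinkv R j s = Vsink -> sinkv R j t = Vsink.
Proof. by move=> jW; apply: updates_to_value_stable => r; apply: updates_to_Vsink. Qed.

Lemma supported_Vsink j v t : j \in W -> supported R f j v t.+1 -> v = Vsink.
Proof. by move=> jW; apply: supported_Vsink_before jW; apply: updates_to_Vsink. Qed.

Variable r : rel P.
Hypothesis rbcastP : rbcast_spec R W f r.
Hypothesis sink_f_reachable :
  forall p j, j \in Vsink -> j \in W -> f_reachable r W f p j.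
Hypothesis sink_members_call :
  forall j, j \in W -> j \in Vsink -> exists s, call R j = Some s.

Lemma received_mono j k v n m : n <= m -> received R j k v n -> received R j k v m.
Proof. by move=> nm [s [sn rec]]; exists s; split=> //; apply: leq_trans nm. Qed.

Lemma correct_sink_member_answers i t0 k :
  i \in W -> call R i = Some t0 -> k \in Vsink -> k \in W ->
  exists n, received R i k Vsink n.
Proof.
move=> iW calli kV kW.
have [_ [callP _]] := algoP iW.
have [t2 delivered] := rbcastP.1 _ _ iW (callP _ calli).1 _ kW (sink_f_reachable i kV kW).
have [_ [callPk [_ [_ [sinkvE [_ [_ [_ [answerP _]]]]]]]]] := algoP kW.
have [s /callPk [_ started]] := sink_members_call kW kV.
have [sinkP1 _ _ _] := sinkP.
have [t1 [_ returned]] := sinkP1 _ _ kW kV started.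
have [t [t1t [_ sent]]] := answerP _ _ _ _ returned delivered.
have sinkvk : sinkv R k t = Vsink.
  by apply: (sinkv_Vsink_stable kW t1t); apply: sinkvE returned.
rewrite sinkvk in sent; have [t' [_ rec]] := channelsP.1 _ _ _ _ kW iW sent.
by exists t'.+1, t'.
Qed.

Lemma supported_eventually i t0 :
  i \in W -> call R i = Some t0 -> f < #|Vsink :&: W| ->
  exists n, supported R f i Vsink n.
Proof.
move=> iW calli fV.
have [n recn] : exists n, forall k, k \in enum (Vsink :&: W) -> received R i k Vsink n.
  apply: eventually_forall_seq => [k ? ?|k]; first exact: received_mono.
  by rewrite mem_enum inE => /andP[kV kW]; apply: correct_sink_member_answers calli kV kW.
by exists n, (Vsink :&: W); split=> // k kK; apply: recn; rewrite mem_enum.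
Qed.

Lemma get_sink_returns_Vsink i t0 :
  i \in W -> call R i = Some t0 -> f < #|Vsink :&: W| ->
  exists t b, ret R i t b Vsink.
Proof.
move=> iW calli fV.
have [_ [_ [_ [_ [_ [_ [waitP [_ [_ [retP retL]]]]]]]]]] := algoP iW.
have [n supp] := supported_eventually iW calli fV.
have [t [v [t0t [suppv sinkvi]]]] := waitP _ _ _ calli supp.
have sinkvi_neq0 : sinkv R i t.+1 != set0.
  rewrite sinkvi (supported_Vsink iW suppv).
  by apply: contraTneq fV => ->; rewrite set0I cards0.
have [t' [b [V [_ returned]]]] :=
  retL _ t.+1 calli (leq_trans (leq_maxl _ _) (leqW t0t)) sinkvi_neq0.
have [_ [VE [V_neq0 _]]] := retP _ _ _ returned.
exists t', b; case: (sinkv_set0_or_Vsink t' iW) => sinkvE; last by rewrite -sinkvE -VE.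
by rewrite VE sinkvE eqxx in V_neq0.
Qed.

End GetSink.

Theorem theorem6 (P : finType) (PD : P -> {set P}) (f : nat) (F : {set P})
  (Vsink : {set P}) (R : run P) (i : P) (t0 : nat) :
  (* Byzantine processes, at most f of them; W = correct processes *)
  #|F| <= f ->
  (* standing assumption *)
  OSR f.+1 (Gdi PD) (~: F) ->
  sink_comp (Gdi PD) setT Vsink ->
  (forall S, sink_comp (Gdi PD) setT S -> S = Vsink) ->
  2 * f + 1 <= #|Vsink :&: ~: F| ->
  (* every correct sink member is f-reachable from every process *)
  (forall p j, j \in Vsink -> j \in ~: F -> f_reachable (Gdi PD) (~: F) f p j) ->
  (* primitives and channels *)
  sink_spec R (~: F) Vsink ->
  rbcast_spec R (~: F) f (Gdi PD) ->
  channels_spec R (~: F) ->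
  (* correct processes run get_sink *)
  (forall j, j \in ~: F -> algo_spec R f j) ->
  (* correct sink members invoke get_sink *)
  (forall j, j \in ~: F -> j \in Vsink -> exists s, call R j = Some s) ->
  (* the correct process i calls get_sink *)
  i \in ~: F -> call R i = Some t0 ->
  exists t b, ret R i t b Vsink.
Proof.
(* The graph hypotheses enter only through the specifications of SINK and of
   the reachable broadcast. *)
move=> F_le _ _ _ sink_card reach sinkP rbcastP channelsP algoP calls iW calli.
have byzantine_le : #|~: ~: F| <= f by rewrite setCK.
apply: (get_sink_returns_Vsink byzantine_le sinkP channelsP algoP rbcastP reach calls iW calli).
by apply: leq_trans sink_card; rewrite addn1 ltnS mul2n -addnn leq_addl.
Qed.
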